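(* Let $n\ge1$ be an integer. For each $k\in[n]$ let $G_k$ be a graph with perfect state transfer from vertex $a_k$ to vertex $b_k$ at a common time $t$ (when $a_k=b_k$ this means $G_k$ is periodic at $a_k$ at time $t>0$), where $a_k\neq b_k$ for at least one $k$. For each $k$, let $\pi_k$ be an equitable partition of $G_k$ in which $a_k$ and $b_k$ lie in singleton cells, with normalized partition matrix $Q_k$. Let $\pi$ be the equitable partition of $\square_{k}G_k$ with normalized partition matrix $\bigotimes_k Q_k$. Then \[ \square_{k=1}^n (G_k/\pi_k)\;\cong\;\Big(\square_{k=1}^n G_k\Big)/\pi, \] and this graph has perfect state transfer between (the cells of) $(a_1,\dots,a_n)$ and $(b_1,\dots,b_n)$ at time $t$.
   Context: Graphs are finite and undirected with adjacency matrix $A$; a graph has perfect state transfer from $u$ to $v$ at time $t$ if $|\langle v|e^{-itA}|u\rangle|=1$, where $|u\rangle$ is the standard basis vector of $u$; it is periodic at $u$ if this holds with $v=u$ for some $t>0$. The Cartesian product has adjacency matrix $A(G)\otimes I+I\otimes A(H)$. A partition $V_1\uplus\cdots\uplus V_m$ is equitable if each vertex of $V_j$ has a constant number $d_{j,k}$ of neighbours in $V_k$; the normalized partition matrix is $Q_{x,j}=|V_j|^{-1/2}[x\in V_j]$; the quotient $G/\pi$ is the weighted graph on the cells with adjacency matrix $Q^TA(G)Q$ (entries $\sqrt{d_{j,k}d_{k,j}}$). *)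

From HB Require Import structures.
From mathcomp Require Import all_boot all_order all_algebra.
From mathcomp Require Import all_classical all_reals.
From mathcomp Require Import topology normedtype sequences.
From mathcomp Require Import complex.
Set Implicit Arguments. Unset Strict Implicit. Unset Printing Implicit Defensive.
Import Order.TTheory GRing.Theory Num.Theory.
Import numFieldTopology.Exports numFieldNormedType.Exports.
Local Open Scope ring_scope.

Definition mat (R : realType) (T : finType) := T -> T -> R.

Section Defs.
Variable R : realType.

Definition mmul (T : finType) (A B : mat R T) : mat R T :=
  fun x y => \sum_(z : T) A x z * B z y.
Definition mid (T : finType) : mat R T := fun x y => (x == y)%:R.
Definition mpow (T : finType) (A : mat R T) (j : nat) : mat R T :=
  iter j (mmul A) (@mid T).

Definition exp_term (T : finType) (A : mat R T) (t : R) (v u : T) (j : nat)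
  : R[i] :=
  (((- 'i * t%:C) ^+ j / (j`!)%:R) * (mpow A j v u)%:C)%C.

(* <v| e^{-itA} |u> : the complex series, summed componentwise *)
Definition exp_entry (T : finType) (A : mat R T) (t : R) (v u : T) : R[i] :=
  Complex (limn (series (fun j => complex.Re (exp_term A t v u j))))
          (limn (series (fun j => complex.Im (exp_term A t v u j)))).

Definition pst (T : finType) (A : mat R T) (u v : T) (t : R) : Prop :=
  `| exp_entry A t v u | = 1.

Definition adjmx (T : finType) (e : rel T) : mat R T := fun x y => (e x y)%:R.

Definition simple_graph (T : finType) (e : rel T) : Prop :=
  symmetric e /\ irreflexive e.

(* A partition of the vertex set T into the cells of C, given by the map
   [cell] (each vertex goes to its cell; cells nonempty = surjective). *)
Definition is_partition (T C : finType) (cell : T -> C) : Prop :=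
  forall c : C, exists x : T, cell x = c.

Definition equitable (T C : finType) (A : mat R T) (cell : T -> C) : Prop :=
  is_partition cell /\
  forall (j k : C) (x y : T), cell x = j -> cell y = j ->
    \sum_(z | cell z == k) A x z = \sum_(z | cell z == k) A y z.

Definition Qmat (T C : finType) (cell : T -> C) (x : T) (j : C) : R :=
  (Num.sqrt (#|[set z | cell z == j]|%:R))^-1 * (cell x == j)%:R.

Definition quotient (T C : finType) (A : mat R T) (cell : T -> C) : mat R C :=
  fun j k => \sum_(x : T) \sum_(y : T) Qmat cell x j * A x y * Qmat cell y k.

(* Cartesian product of n weighted graphs (vertex set the product type):
   adjacency matrix sum_k I (x) .. (x) A_k (x) .. (x) I *)
Definition cartprod (n : nat) (V : 'I_n -> finType) (A : forall k, mat R (V k))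
  : mat R {dffun forall k : 'I_n, V k} :=
  fun x y => \sum_(k < n) A k (x k) (y k) *
               \prod_(l < n | l != k) (x l == y l)%:R.

Definition prodcell (n : nat) (V C : 'I_n -> finType)
  (cell : forall k, V k -> C k) (x : {dffun forall k : 'I_n, V k})
  : {dffun forall k : 'I_n, C k} :=
  [ffun k => cell k (x k)].

Definition wiso (T1 T2 : finType) (A1 : mat R T1) (A2 : mat R T2) : Prop :=
  exists f : T1 -> T2, bijective f /\ forall x y, A2 (f x) (f y) = A1 x y.

End Defs.

(* The amplitudes F v t = <v| e^{-itA} |u> solve the Schrodinger system
   F' = -i A F with F 0 = |u>, and for symmetric A this system has unique
   solutions: the energy \sum_v |F v - G v|^2 of the difference of two solutions
   is constant.  The adjacency matrix of a Cartesian product acts on one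
   coordinate at a time, so the product of the amplitudes of the factors solves
   the system of the product: amplitudes multiply.  For an equitable partition
   with normalized matrix Q we have A Q = Q (Q^T A Q), hence A^j Q = Q (Q^T A Q)^j,
   and at singleton cells Q is a coordinate vector, so there the quotient has the
   same amplitudes as the graph.  Finally the product partition is equitable and
   its quotient is, entry by entry, the Cartesian product of the quotients. *)

From HB Require Import structures.
From mathcomp Require Import all_boot all_order all_algebra.
From mathcomp Require Import all_classical all_reals.
From mathcomp Require Import topology normedtype sequences.
From mathcomp Require Import complex exp derive realfun.
From mathcomp Require Import ring.
Import Order.TTheory GRing.Theory Num.Theory.
Import numFieldTopology.Exports numFieldNormedType.Exports.
Local Open Scope ring_scope.

Set Implicit Arguments. Unset Strict Implicit.

Section ComplexDerivative.
Variable R : realType.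
Local Notation C := R[i].
Implicit Types (z : C) (r : R).

Lemma Re_mulNi z : complex.Re (- 'i%C * z) = complex.Im z.
Proof. by case: z => a b; simpc. Qed.

Lemma Im_mulNi z : complex.Im (- 'i%C * z) = - complex.Re z.
Proof. by case: z => a b; simpc. Qed.

Lemma Re_realM r z : complex.Re (r%:C%C * z) = r * complex.Re z.
Proof. by case: z => a b; simpc. Qed.

Lemma Im_realM r z : complex.Im (r%:C%C * z) = r * complex.Im z.
Proof. by case: z => a b; simpc. Qed.

Lemma complex_ReM (x y : C) : complex.Re (x * y) =
  complex.Re x * complex.Re y - complex.Im x * complex.Im y.
Proof. by case: x => a b; case: y. Qed.

Lemma complex_ImM (x y : C) : complex.Im (x * y) =
  complex.Re x * complex.Im y + complex.Im x * complex.Re y.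
Proof. by case: x => a b; case: y. Qed.

Lemma Re_sum (I : finType) (f : I -> C) :
  complex.Re (\sum_i f i) = \sum_i complex.Re (f i).
Proof. exact: raddf_sum. Qed.

Lemma Im_sum (I : finType) (f : I -> C) :
  complex.Im (\sum_i f i) = \sum_i complex.Im (f i).
Proof. exact: raddf_sum. Qed.

Lemma is_derive_sumf (I : finType) (h : I -> R -> R) (dh : I -> R) s :
  (forall i, is_derive s (1 : R) (h i) (dh i)) ->
  is_derive s (1 : R) (fun t => \sum_i h i t) (\sum_i dh i).
Proof.
move=> hd; have -> : (fun t => \sum_i h i t) = \sum_i h i.
  by apply/funext => t; rewrite fct_sumE.
by elim/big_ind2: _ => // [|f1 d1 f2 d2]; [exact: is_derive_cst | exact: is_deriveD].
Qed.

Definition is_cderive (s : R) (F : R -> C) (d : C) : Prop :=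
  is_derive s (1 : R) (fun t => complex.Re (F t)) (complex.Re d) /\
  is_derive s (1 : R) (fun t => complex.Im (F t)) (complex.Im d).

Lemma is_cderive_cst (c : C) s : is_cderive s (fun=> c) 0.
Proof. by split; apply: is_derive_cst. Qed.

Lemma is_cderiveB (F G : R -> C) s a b : is_cderive s F a -> is_cderive s G b ->
  is_cderive s (fun t => F t - G t) (a - b).
Proof.
move=> [hF1 hF2] [hG1 hG2]; split; under eq_fun do rewrite raddfB; rewrite raddfB.
- exact (is_deriveB hF1 hG1).
- exact (is_deriveB hF2 hG2).
Qed.

Lemma is_cderiveM (F G : R -> C) s a b : is_cderive s F a -> is_cderive s G b ->
  is_cderive s (fun t => F t * G t) (a * G s + F s * b).
Proof.
move=> [hF1 hF2] [hG1 hG2]; split.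
- under eq_fun do rewrite complex_ReM.
  (* the derivative itself is found by the [is_derive] instances *)
  apply: is_derive_eq.
  by rewrite [RHS]raddfD /= !complex_ReM /GRing.scale /=; ring.
- under eq_fun do rewrite complex_ImM.
  apply: is_derive_eq.
  by rewrite [RHS]raddfD /= !complex_ImM /GRing.scale /=; ring.
Qed.

Lemma is_cderive_prod_seq (I : eqType) (r : seq I) (F : I -> R -> C) d s :
  uniq r -> (forall i, is_cderive s (F i) (d i)) ->
  is_cderive s (fun t => \prod_(i <- r) F i t)
    (\sum_(i <- r) d i * \prod_(j <- r | j != i) F j s).
Proof.
move=> + hd; elim: r => [_|a r IH /= /andP [ar ur]].
  under eq_fun do rewrite big_nil.
  by rewrite big_nil; exact: is_cderive_cst.
under eq_fun do rewrite big_cons.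
have -> : \sum_(i <- a :: r) d i * \prod_(j <- a :: r | j != i) F j s =
    d a * \prod_(i <- r) F i s + F a s * \sum_(i <- r) d i * \prod_(j <- r | j != i) F j s.
  rewrite !big_cons eqxx mulr_sumr; congr (_ + _).
    congr (_ * _); rewrite big_seq_cond [RHS]big_seq_cond.
    by apply: eq_bigl => j; case: eqP => // ->; rewrite (negbTE ar).
  apply: eq_big_seq => i ir; rewrite big_cons mulrCA.
  by case: eqP => // ai; rewrite ai ir in ar.
exact: is_cderiveM (hd a) (IH ur).
Qed.

Lemma is_cderive_prod (I : finType) (F : I -> R -> C) d s :
  (forall i, is_cderive s (F i) (d i)) ->
  is_cderive s (fun t => \prod_i F i t) (\sum_i d i * \prod_(j | j != i) F j s).
Proof. exact/is_cderive_prod_seq/index_enum_uniq. Qed.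

End ComplexDerivative.

Section Schrodinger.
Variables (R : realType) (T : finType) (B : mat R T).
Hypothesis B_sym : forall x y, B x y = B y x.
Local Notation C := R[i].

Definition schrodinger_sol (F : T -> R -> C) : Prop :=
  forall x s, is_cderive s (F x) (- 'i%C * \sum_w (B x w)%:C%C * F w s).

(* The energy [\sum_x |F x s|^2] of a solution is constant because [B] is symmetric. *)
Lemma schrodinger_sol_eq0 (F : T -> R -> C) :
  schrodinger_sol F -> (forall x, F x 0 = 0) -> forall x t, F x t = 0.
Proof.
move=> solF F0 x t.
pose P y s := complex.Re (F y s); pose Q y s := complex.Im (F y s).
have dP y s : is_derive s (1 : R) (P y) (\sum_w B y w * Q w s).
  apply: is_derive_eq (proj1 (solF y s)) _.
  by rewrite Re_mulNi Im_sum; apply: eq_bigr => w _; rewrite Im_realM.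
have dQ y s : is_derive s (1 : R) (Q y) (- \sum_w B y w * P w s).
  apply: is_derive_eq (proj2 (solF y s)) _.
  by rewrite Im_mulNi Re_sum; congr (- _); apply: eq_bigr => w _; rewrite Re_realM.
pose E s := \sum_y (P y s * P y s + Q y s * Q y s).
have dE s : is_derive s (1 : R) E 0.
  apply: is_derive_eq; first by apply: is_derive_sumf => y; exact: is_deriveD.
  have skew : \sum_y Q y s * (\sum_w B y w * P w s) = \sum_y P y s * (\sum_w B y w * Q w s).
    under eq_bigr do rewrite mulr_sumr.
    rewrite exchange_big /=; apply: eq_bigr => y _; rewrite mulr_sumr.
    by apply: eq_bigr => w _; rewrite B_sym; ring.
  rewrite /GRing.scale /=.
  transitivity (\sum_y (2 * (P y s * \sum_w B y w * Q w s) - 2 * (Q y s * \sum_w B y w * P w s))).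
    by apply: eq_bigr => y _; ring.
  by rewrite sumrB -!mulr_sumr skew subrr.
have : E t = 0.
  rewrite (is_derive_0_is_cst t 0 dE) /E big1 // => y _.
  by rewrite /P /Q F0 mulr0 addr0.
move/eqP; rewrite psumr_eq0 => [|y _]; last by rewrite addr_ge0 ?sqr_ge0.
move=> /allP /(_ x (mem_index_enum x)) /implyP /(_ isT).
rewrite paddr_eq0 ?sqr_ge0 // !mulf_eq0 !orbb /P /Q.
by case: (F x t) => a b /andP [/eqP /= -> /eqP /= ->].
Qed.

Lemma schrodinger_sol_uniq (F G : T -> R -> C) :
  schrodinger_sol F -> schrodinger_sol G -> (forall x, F x 0 = G x 0) ->
  forall x t, F x t = G x t.
Proof.
move=> solF solG FG0 x t; apply/eqP; rewrite -subr_eq0; apply/eqP.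
apply: (schrodinger_sol_eq0 (F := fun y s => F y s - G y s)) => [y s|y]; last first.
  by rewrite FG0 subrr.
have -> : - 'i%C * \sum_w (B y w)%:C%C * (F w s - G w s) =
    - 'i%C * \sum_w (B y w)%:C%C * F w s - - 'i%C * \sum_w (B y w)%:C%C * G w s.
  by rewrite -mulrBr -sumrB; congr (_ * _); apply: eq_bigr => w _; rewrite mulrBr.
exact: is_cderiveB.
Qed.

End Schrodinger.

Section PowerSeries.
Variable R : realType.
Local Open Scope classical_set_scope.

Lemma cvg_pseries_exp_bound (L : R) (c : R^nat) x : 0 <= L ->
  (forall j, `|c j| <= L ^+ j / j`!%:R) -> cvgn (pseries c x).
Proof.
move=> L0 hc; apply: normed_cvg.
apply: (@series_le_cvg _ _ (exp_coeff (L * `|x|))) => [j|j|j|].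
- exact: normr_ge0.
- exact/exp_coeff_ge0/mulr_ge0.
- rewrite /exp_coeff /= normrM normrX exprMn mulrAC.
  by apply: ler_wpM2r; [exact: exprn_ge0 | exact: hc].
- exact: is_cvg_series_exp_coeff.
Qed.

Lemma pseries_sumE (I : finType) (a : I -> R) (c : I -> R^nat) x :
  pseries (fun j => \sum_i a i * c i j) x = (fun m => \sum_i a i * pseries (c i) x m).
Proof.
apply/funext => m; rewrite /pseries /series /=.
under eq_bigr do rewrite mulr_suml.
rewrite exchange_big /=; apply: eq_bigr => i _.
by rewrite mulr_sumr; apply: eq_bigr => j _; rewrite mulrA.
Qed.

Lemma cvg_pseries_sum (I : finType) (a : I -> R) (c : I -> R^nat) x :
  (forall i, cvgn (pseries (c i) x)) ->
  pseries (fun j => \sum_i a i * c i j) x @ \oo --> \sum_i a i * limn (pseries (c i) x).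
Proof.
move=> hc; rewrite pseries_sumE.
apply: cvg_big => [|i _]; first exact: add_continuous.
by apply: cvgM; [exact: cvg_cst | exact: hc].
Qed.

Lemma is_cvg_pseries_sum (I : finType) (a : I -> R) (c : I -> R^nat) x :
  (forall i, cvgn (pseries (c i) x)) -> cvgn (pseries (fun j => \sum_i a i * c i j) x).
Proof. by move=> hc; apply/cvg_ex; eexists; exact: cvg_pseries_sum. Qed.

Lemma lim_pseries_sum (I : finType) (a : I -> R) (c : I -> R^nat) x :
  (forall i, cvgn (pseries (c i) x)) ->
  limn (pseries (fun j => \sum_i a i * c i j) x) = \sum_i a i * limn (pseries (c i) x).
Proof. by move=> hc; apply/cvg_lim/cvg_pseries_sum. Qed.

Lemma pseries_diffs_sum (I : finType) (a : I -> R) (c : I -> R^nat) :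
  pseries_diffs (fun j => \sum_i a i * c i j) =
  (fun j => \sum_i a i * pseries_diffs (c i) j).
Proof.
by apply/funext => j; rewrite /pseries_diffs mulr_sumr; apply: eq_bigr => i _; rewrite mulrCA.
Qed.

Lemma lim_pseries0 (c : R^nat) : limn (pseries c 0) = c 0%N.
Proof.
apply: cvg_lim => //; rewrite -cvg_shiftS.
have -> : (fun m => pseries c 0 m.+1) = (fun=> c 0%N).
  apply/funext => m; rewrite /pseries /series /= big_nat_recl //= expr0 mulr1.
  by rewrite big1 ?addr0 // => i _; rewrite expr0n mulr0.
exact: cvg_cst.
Qed.

Lemma is_derive_pseries (c : R^nat) t :
  (forall x, cvgn (pseries c x)) ->
  (forall x, cvgn (pseries (pseries_diffs c) x)) ->
  (forall x, cvgn (pseries (pseries_diffs (pseries_diffs c)) x)) ->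
  is_derive t (1 : R) (fun s => limn (pseries c s)) (limn (pseries (pseries_diffs c) t)).
Proof.
move=> c0 c1 c2; apply: (pseries_snd_diffs (K := `|t| + 1)) => //.
by rewrite [X in _ < X]ger0_norm ?ltrDl // addr_ge0.
Qed.

End PowerSeries.

Section MatrixPower.
Variable R : realType.

Lemma sum_midl (T : finType) (F : T -> R) x : \sum_z mid R x z * F z = F x.
Proof.
rewrite (bigD1 x) //= big1 ?addr0 /mid ?eqxx ?mul1r // => z zx.
by rewrite eq_sym (negbTE zx) mul0r.
Qed.

Lemma sum_midr (T : finType) (F : T -> R) y : \sum_z F z * mid R z y = F y.
Proof. by rewrite -[RHS](sum_midl F y); apply: eq_bigr => z _; rewrite mulrC /mid eq_sym. Qed.

Lemma mpowS (T : finType) (A : mat R T) j : mpow A j.+1 = mmul A (mpow A j).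
Proof. by []. Qed.

Lemma mpow_intertwine (T C : finType) (A : mat R T) (B : mat R C) (Q : T -> C -> R) :
  (forall x c, \sum_z A x z * Q z c = \sum_d Q x d * B d c) ->
  forall j x c, \sum_z mpow A j x z * Q z c = \sum_d Q x d * mpow B j d c.
Proof.
move=> AQ; elim=> [|j IH] x c; first by rewrite sum_midl sum_midr.
rewrite !mpowS /mmul.
transitivity (\sum_y A x y * \sum_z mpow A j y z * Q z c).
  under eq_bigr do rewrite mulr_suml; rewrite exchange_big /=.
  by apply: eq_bigr => y _; rewrite mulr_sumr; apply: eq_bigr => z _; rewrite mulrA.
under eq_bigr do rewrite IH mulr_sumr; rewrite exchange_big /=.
transitivity (\sum_d (\sum_e Q x e * B e d) * mpow B j d c).
  by apply: eq_bigr => d _; rewrite -AQ mulr_suml; apply: eq_bigr => y _; rewrite mulrA.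
transitivity (\sum_d \sum_e Q x e * B e d * mpow B j d c).
  by apply: eq_bigr => d _; rewrite mulr_suml.
rewrite exchange_big /=.
by apply: eq_bigr => e _; rewrite mulr_sumr; apply: eq_bigr => d _; rewrite mulrA.
Qed.

End MatrixPower.

Section ExpEntry.
Variables (R : realType) (T : finType) (A : mat R T).
Local Notation C := R[i].

Lemma normr_ReIm_expNi_le1 j :
  `|complex.Re ((- 'i : C) ^+ j)| <= 1 /\ `|complex.Im ((- 'i : C) ^+ j)| <= 1.
Proof.
elim: j => [|j [h1 h2]]; first by rewrite expr0 /= normr0 normr1.
by rewrite exprSr mulrC Re_mulNi Im_mulNi normrN.
Qed.

Definition exp_coef_re (v u : T) (j : nat) : R :=
  complex.Re ((- 'i : C) ^+ j) * (j`!%:R)^-1 * mpow A j v u.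
Definition exp_coef_im (v u : T) (j : nat) : R :=
  complex.Im ((- 'i : C) ^+ j) * (j`!%:R)^-1 * mpow A j v u.

Lemma exp_entryE t v u : exp_entry A t v u =
  Complex (limn (pseries (exp_coef_re v u) t)) (limn (pseries (exp_coef_im v u) t)).
Proof.
have exp_termE j : exp_term A t v u j =
    (- 'i) ^+ j * ((t ^+ j * (j`!%:R)^-1 * mpow A j v u)%:C)%C.
  rewrite /exp_term exprMn -!mulrA; congr (_ * _).
  by rewrite !rmorphM /= rmorphXn /= fmorphV /= rmorph_nat.
rewrite /exp_entry /pseries; congr (Complex (limn (series _)) (limn (series _))).
- by apply/funext => j; rewrite exp_termE mulrC Re_realM /exp_coef_re /=; ring.
- by apply/funext => j; rewrite exp_termE mulrC Im_realM /exp_coef_im /=; ring.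
Qed.

Lemma exp_entry0 v u : exp_entry A 0 v u = ((v == u)%:R)%:C%C.
Proof.
by rewrite exp_entryE !lim_pseries0 /exp_coef_re /exp_coef_im /= invr1 !mulr1 mul1r mul0r.
Qed.

Definition mxnorm : R := \sum_x \sum_y `|A x y|.

Lemma mxnorm_ge0 : 0 <= mxnorm.
Proof. by apply: sumr_ge0 => x _; apply: sumr_ge0 => y _; exact: normr_ge0. Qed.

Lemma mpow_norm_le j v u : `|mpow A j v u| <= mxnorm ^+ j.
Proof.
elim: j v u => [|j IH] v u.
  by rewrite expr0 /mpow /= /mid; case: (v == u); rewrite ?normr1 ?normr0.
rewrite mpowS /mmul exprS.
apply: le_trans (ler_norm_sum _ _ _) _.
apply: (@le_trans _ _ (\sum_z `|A v z| * mxnorm ^+ j)).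
  by apply: ler_sum => z _; rewrite normrM ler_wpM2l.
rewrite -mulr_suml ler_wpM2r ?exprn_ge0 ?mxnorm_ge0 //.
rewrite /mxnorm [leRHS](bigD1 v) //= lerDl.
by apply: sumr_ge0 => x _; apply: sumr_ge0 => y _; exact: normr_ge0.
Qed.

Lemma cvg_pseries_exp_coef (r : R^nat) v u x : (forall j, `|r j| <= 1) ->
  cvgn (pseries (fun j => r j * (j`!%:R)^-1 * mpow A j v u) x).
Proof.
move=> r1; apply: (cvg_pseries_exp_bound mxnorm_ge0) => j.
rewrite !normrM [`|(j`!%:R)^-1|]ger0_norm ?invr_ge0 // mulrAC.
rewrite ler_wpM2r ?invr_ge0 // -[leRHS]mul1r.
by apply: ler_pM => //; exact: mpow_norm_le.
Qed.

Lemma cvg_exp_coef_re v u x : cvgn (pseries (exp_coef_re v u) x).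
Proof. by apply: cvg_pseries_exp_coef => j; case: (normr_ReIm_expNi_le1 j). Qed.

Lemma cvg_exp_coef_im v u x : cvgn (pseries (exp_coef_im v u) x).
Proof. by apply: cvg_pseries_exp_coef => j; case: (normr_ReIm_expNi_le1 j). Qed.

Lemma pseries_diffs_exp_coef v u :
  pseries_diffs (exp_coef_re v u) = (fun j => \sum_w A v w * exp_coef_im w u j) /\
  pseries_diffs (exp_coef_im v u) = (fun j => \sum_w (- A v w) * exp_coef_re w u j).
Proof.
have fact_neq0 j : (j`!%:R : R) != 0 by rewrite pnatr_eq0 -lt0n fact_gt0.
have Sj_neq0 j : (j.+1%:R : R) != 0 by rewrite pnatr_eq0.
rewrite /pseries_diffs /exp_coef_re /exp_coef_im.
split; apply/funext => j; rewrite exprSr [_ ^+ j * _]mulrC ?Re_mulNi ?Im_mulNi.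
all: rewrite mpowS /mmul factS natrM !mulr_sumr.
all: by apply: eq_bigr => w _; field; rewrite fact_neq0 nat1r Sj_neq0.
Qed.

Lemma is_cderive_exp_entry v u s :
  is_cderive s (fun t => exp_entry A t v u)
    (- 'i%C * \sum_w (A v w)%:C%C * exp_entry A s w u).
Proof.
have diffs_re w := (pseries_diffs_exp_coef w u).1.
have diffs_im w := (pseries_diffs_exp_coef w u).2.
have cvg_diffs_re w x : cvgn (pseries (pseries_diffs (exp_coef_re w u)) x).
  by rewrite diffs_re; apply: is_cvg_pseries_sum => w'; exact: cvg_exp_coef_im.
have cvg_diffs_im w x : cvgn (pseries (pseries_diffs (exp_coef_im w u)) x).
  by rewrite diffs_im; apply: is_cvg_pseries_sum => w'; exact: cvg_exp_coef_re.
rewrite /is_cderive.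
have -> : (fun t => complex.Re (exp_entry A t v u)) = fun t => limn (pseries (exp_coef_re v u) t).
  by apply/funext => t; rewrite exp_entryE.
have -> : (fun t => complex.Im (exp_entry A t v u)) = fun t => limn (pseries (exp_coef_im v u) t).
  by apply/funext => t; rewrite exp_entryE.
split; apply: is_derive_eq.
- apply: is_derive_pseries => x; [exact: cvg_exp_coef_re | exact: cvg_diffs_re |].
  by rewrite diffs_re pseries_diffs_sum; apply: is_cvg_pseries_sum => w; exact: cvg_diffs_im.
- rewrite diffs_re lim_pseries_sum => [|w]; last exact: cvg_exp_coef_im.
  by rewrite Re_mulNi Im_sum; apply: eq_bigr => w _; rewrite Im_realM exp_entryE.
- apply: is_derive_pseries => x; [exact: cvg_exp_coef_im | exact: cvg_diffs_im |].
  by rewrite diffs_im pseries_diffs_sum; apply: is_cvg_pseries_sum => w; exact: cvg_diffs_re.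
- rewrite diffs_im lim_pseries_sum => [|w]; last exact: cvg_exp_coef_re.
  rewrite Im_mulNi Re_sum -sumrN; apply: eq_bigr => w _.
  by rewrite Re_realM exp_entryE mulNr.
Qed.

Lemma eq_exp_entry (T' : finType) (A' : mat R T') t v u v' u' :
  (forall j, mpow A j v u = mpow A' j v' u') -> exp_entry A t v u = exp_entry A' t v' u'.
Proof.
move=> eqA; rewrite /exp_entry; suff -> : exp_term A t v u = exp_term A' t v' u' by [].
by apply/funext => j; rewrite /exp_term eqA.
Qed.

Lemma exp_entry_schrodinger u : schrodinger_sol A (fun v t => exp_entry A t v u).
Proof. by move=> v s; exact: is_cderive_exp_entry. Qed.

End ExpEntry.

Section CartesianProduct.
Variables (n : nat) (V : 'I_n -> finType).
Local Notation DT := {dffun forall k : 'I_n, V k}.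

Definition dfupd (x : DT) (k : 'I_n) (w : V k) : DT := finfun (dfwith (fun l => x l) k w).
Arguments dfupd : clear implicits.

Lemma dfupd_eq (x : DT) k (w : V k) : dfupd x k w k = w.
Proof. by rewrite ffunE; exact: dfwith_in. Qed.

Lemma dfupd_neq (x : DT) k (w : V k) (l : 'I_n) : l != k -> dfupd x k w l = x l.
Proof. by move=> lk; rewrite ffunE; apply: dfwith_out; rewrite eq_sym. Qed.

Lemma dffun_neq (x y : DT) : x != y -> exists k, x k != y k.
Proof.
move=> xy; apply/existsP; apply: contraNT xy => /existsPn xy.
by apply/eqP/ffunP => k; exact/eqP/negPn.
Qed.

Lemma sum_dfupd (S : comNzRingType) (F : DT -> S) (x : DT) k (g : V k -> S) :
  \sum_(y : DT) (g (y k) * \prod_(l | l != k) ((x l == y l)%:R : S)) * F y =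
  \sum_w g w * F (dfupd x k w).
Proof.
rewrite (partition_big (fun y : DT => y k) xpredT) //=; apply: eq_bigr => w _.
rewrite (bigD1 (dfupd x k w)) /= ?dfupd_eq ?eqxx //.
rewrite big1 ?mulr1 => [|l lk]; last by rewrite dfupd_neq ?eqxx.
rewrite big1 ?addr0 // => y /andP [/eqP yk y_neq].
have [l yl] := dffun_neq y_neq.
have lk : l != k by apply: contraNneq yl => ->; rewrite dfupd_eq yk.
rewrite dfupd_neq // in yl.
by rewrite (bigD1 l) //= eq_sym (negbTE yl) mul0r mulr0 mul0r.
Qed.

Variables (R : realType) (A : forall k, mat R (V k)).
Arguments A : clear implicits.
Local Notation AG := (cartprod A).

Lemma cartprod_sum (S : comNzRingType) (f : {rmorphism R -> S}) (F : DT -> S) (x : DT) :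
  \sum_y f (AG x y) * F y = \sum_k \sum_(w : V k) f (A k (x k) w) * F (dfupd x k w).
Proof.
rewrite /cartprod; under eq_bigr do rewrite rmorph_sum mulr_suml.
rewrite exchange_big; apply: eq_bigr => k _; rewrite -sum_dfupd.
apply: eq_bigr => y _; rewrite rmorphM rmorph_prod.
by under eq_bigr do rewrite rmorph_nat.
Qed.

Lemma cartprod_sym : (forall k x y, A k x y = A k y x) -> forall x y, AG x y = AG y x.
Proof.
move=> A_sym x y; apply: eq_bigr => k _; rewrite A_sym; congr (_ * _).
by apply: eq_bigr => l _; rewrite eq_sym.
Qed.

Lemma exp_entry_cartprod (a : forall k, V k) t x :
  (forall k x y, A k x y = A k y x) ->
  exp_entry AG t x (finfun a) = \prod_k exp_entry (A k) t (x k) (a k).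
Proof.
move=> A_sym; apply: (schrodinger_sol_uniq (cartprod_sym A_sym)
  (F := fun x t => exp_entry AG t x (finfun a))
  (G := fun x t => \prod_k exp_entry (A k) t (x k) (a k))) => [|y s|y].
- exact: exp_entry_schrodinger.
- have := is_cderive_prod (fun k => is_cderive_exp_entry (A k) (y k) (a k) s).
  congr is_cderive.
  rewrite (cartprod_sum (S := R[i]) (real_complex R)) mulr_sumr; apply: eq_bigr => k _.
  rewrite -mulrA mulr_suml; congr (_ * _); apply: eq_bigr => w _; rewrite -mulrA; congr (_ * _).
  rewrite [RHS](bigD1 k) // dfupd_eq; congr (_ * _).
  by apply: eq_bigr => l lk; rewrite dfupd_neq.
- rewrite exp_entry0; have [->|y_neq] := eqVneq y (finfun a).
    by rewrite big1 // => k _; rewrite ffunE exp_entry0 eqxx.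
  have [k] := dffun_neq y_neq; rewrite ffunE => /negbTE yk.
  by rewrite (bigD1 k) //= exp_entry0 yk mul0r.
Qed.

End CartesianProduct.
Arguments dfupd {n V} x k w.

Section Partition.
Variables (R : realType) (T C : finType) (cell : T -> C).

Definition cell_sqrt (c : C) : R := Num.sqrt #|[set z | cell z == c]|%:R.

Lemma cell_sqrt_neq0 : is_partition cell -> forall c, cell_sqrt c != 0.
Proof.
move=> cell_onto c; have [z zc] := cell_onto c.
rewrite sqrtr_eq0 -ltNge ltr0n; apply/card_gt0P; exists z; by rewrite inE zc.
Qed.

Lemma cell_sqrt_sqr c : cell_sqrt c ^+ 2 = #|[set z | cell z == c]|%:R.
Proof. by rewrite sqr_sqrtr ?ler0n. Qed.

Lemma sum_Qmat (F : C -> R) x :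
  \sum_d Qmat R cell x d * F d = Qmat R cell x (cell x) * F (cell x).
Proof.
rewrite (bigD1 (cell x)) //= big1 ?addr0 // => d dx.
by rewrite /Qmat eq_sym (negbTE dx) mulr0 mul0r.
Qed.

Lemma Qmat_singleton u : (forall z, cell z = cell u -> z = u) ->
  forall z, Qmat R cell z (cell u) = (z == u)%:R.
Proof.
move=> u_single z; rewrite /Qmat /cell_sqrt.
have -> : [set y | cell y == cell u] = [set u].
  by apply/setP => y; rewrite !inE; apply/eqP/eqP => [/u_single|->].
rewrite cards1 sqrtr1 invr1 mul1r.
by have -> : (cell z == cell u) = (z == u) by apply/eqP/eqP => [/u_single|->].
Qed.

End Partition.

Section EquitableQuotient.
Variables (R : realType) (T C : finType) (A : mat R T) (cell : T -> C).
Hypothesis A_equitable : equitable A cell.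

Local Notation cell_sqrt := (cell_sqrt R cell).
Let cell_sqrt_neq0 := cell_sqrt_neq0 R A_equitable.1.

Definition cell_deg (x : T) (c : C) : R := \sum_(z | cell z == c) A x z.

Lemma quotientE x k :
  quotient A cell (cell x) k = cell_sqrt (cell x) / cell_sqrt k * cell_deg x k.
Proof.
have cell_degE y : cell y = cell x -> cell_deg y k = cell_deg x k.
  by move=> yx; exact: A_equitable.2 _ _ _ _ yx erefl.
transitivity (\sum_(y | cell y == cell x)
    (cell_sqrt (cell x))^-1 * (cell_sqrt k)^-1 * cell_deg x k).
  rewrite /quotient (bigID (fun y => cell y == cell x)) /=.
  rewrite [X in _ + X]big1 ?addr0 => [|y /negbTE yx]; last first.
    by apply: big1 => z _; rewrite /Qmat yx !mulr0 !mul0r.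
  apply: eq_bigr => y /eqP yx; rewrite -(cell_degE y yx) /cell_deg mulr_sumr.
  rewrite (bigID (fun z => cell z == k)) /= [X in _ + X]big1 ?addr0 => [|z /negbTE zk]; last first.
    by rewrite /Qmat zk !mulr0.
  by apply: eq_bigr => z zk; rewrite /Qmat yx zk eqxx !mulr1 mulrAC.
rewrite sumr_const -mulr_natl.
rewrite (eq_card (B := [set z | cell z == cell x])) => [|z]; last by rewrite inE.
rewrite -cell_sqrt_sqr; field; by rewrite !cell_sqrt_neq0.
Qed.

Lemma Qmat_intertwine x c :
  \sum_z A x z * Qmat R cell z c = \sum_d Qmat R cell x d * quotient A cell d c.
Proof.
rewrite sum_Qmat quotientE /Qmat eqxx mulr1 mulrA mulrA mulVf ?cell_sqrt_neq0 // mul1r /cell_deg.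
rewrite (bigID (fun z => cell z == c)) /= [X in _ + X]big1 ?addr0 => [|z /negbTE zc]; last first.
  by rewrite /Qmat zc !mulr0.
by rewrite mulr_sumr; apply: eq_bigr => z /eqP zc; rewrite /Qmat zc eqxx mulr1 mulrC.
Qed.

Lemma exp_entry_quotient_singleton t u v :
  (forall z, cell z = cell u -> z = u) -> (forall z, cell z = cell v -> z = v) ->
  exp_entry (quotient A cell) t (cell v) (cell u) = exp_entry A t v u.
Proof.
move=> u_single v_single; apply: eq_exp_entry => j.
have := mpow_intertwine Qmat_intertwine j v (cell u).
rewrite sum_Qmat (bigD1 u) //= big1 ?addr0 => [|z zu]; last first.
  by rewrite Qmat_singleton // (negbTE zu) mulr0.
by rewrite !Qmat_singleton // !eqxx mulr1 mul1r.
Qed.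

End EquitableQuotient.

Lemma prod_nat_of_bool (S : comPzSemiRingType) (I : finType) (P : pred I) (b : pred I) :
  \prod_(i | P i) ((b i)%:R : S) = ([forall i, P i ==> b i])%:R.
Proof.
case: (pickP (fun i => P i && ~~ b i)) => [i /andP [Pi /negbTE bi]|Pb].
  rewrite (bigD1 i) //= bi mul0r; case: forallP => // /(_ i).
  by rewrite Pi bi.
have Pb' i : P i -> b i by move=> Pi; move: (Pb i); rewrite Pi => /negbFE.
rewrite big1 => [|i /Pb' ->] //; case: forallP => // -[] i.
exact/implyP/Pb'.
Qed.

Section ProductPartition.
Variables (R : realType) (n : nat) (V C : 'I_n -> finType).
Variables (A : forall k, mat R (V k)) (cell : forall k, V k -> C k).
Arguments A : clear implicits.
Arguments cell : clear implicits.
Hypothesis A_equitable : forall k, equitable (A k) (cell k).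
Local Notation DT := {dffun forall k : 'I_n, V k}.
Local Notation DC := {dffun forall k : 'I_n, C k}.
Local Notation AG := (cartprod A).
Local Notation pi := (prodcell cell).

Lemma prodcellE (x : DT) k : pi x k = cell k (x k).
Proof. by rewrite ffunE. Qed.

Definition agree_off (k : 'I_n) (x : DT) (K : DC) : bool :=
  [forall l, (l != k) ==> (cell l (x l) == K l)].

Lemma prodcell_dfupd (x : DT) k (w : V k) (K : DC) :
  (pi (dfupd x k w) == K) = (cell k w == K k) && agree_off k x K.
Proof.
apply/eqP/andP => [<-|[/eqP wK /forallP xK]].
  split; first by rewrite prodcellE dfupd_eq.
  by apply/forallP => l; apply/implyP => lk; rewrite prodcellE dfupd_neq.
apply/ffunP => l; rewrite prodcellE.
have [->|lk] := eqVneq l k; first by rewrite dfupd_eq.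
by rewrite dfupd_neq //; apply/eqP; exact: implyP (xK l) lk.
Qed.

Lemma prodcell_singleton (c : forall k, V k) :
  (forall k x, cell k x = cell k (c k) -> x = c k) ->
  forall z, pi z = pi (finfun c) -> z = finfun c.
Proof.
move=> c_single z /ffunP zc; apply/ffunP => k; rewrite ffunE; apply: c_single.
by have := zc k; rewrite !prodcellE ffunE.
Qed.

Lemma cell_deg_cartprod (x : DT) (K : DC) :
  cell_deg AG pi x K = \sum_k (agree_off k x K)%:R * cell_deg (A k) (cell k) (x k) (K k).
Proof.
rewrite /cell_deg big_mkcond.
have -> : \sum_z (if pi z == K then AG x z else 0) = \sum_z AG x z * (pi z == K)%:R.
  by apply: eq_bigr => z _; case: eqP; rewrite ?(mulr1, mulr0).
have /= -> := cartprod_sum A idfun (fun z => (pi z == K)%:R) x.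
apply: eq_bigr => k _.
rewrite mulr_sumr [RHS]big_mkcond; apply: eq_bigr => w _ /=.
rewrite prodcell_dfupd; case: (cell k w == K k); case: (agree_off k x K).
all: by rewrite /= ?(mulr0, mulr1, mul1r, mul0r).
Qed.

Lemma prodcell_equitable : equitable AG pi.
Proof.
split=> [K|J K x y xJ yJ].
  have cellK k : exists w, cell k w == K k by have [w <-] := (A_equitable k).1 (K k); exists w.
  exists (finfun (fun k => xchoose (cellK k))); apply/ffunP => k.
  by rewrite prodcellE ffunE; apply/eqP; exact: xchooseP (cellK k).
rewrite -/(cell_deg AG pi x K) -/(cell_deg AG pi y K) !cell_deg_cartprod.
apply: eq_bigr => k _.
have -> : agree_off k x K = agree_off k y K.
  by apply: eq_forallb => l; rewrite -!prodcellE xJ yJ.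
congr (_ * _); apply: (A_equitable k).2 (J k) _ _ _ _ _; by rewrite -prodcellE ?xJ ?yJ.
Qed.

Lemma cell_sqrt_prodcell (X : DC) : cell_sqrt R pi X = \prod_k cell_sqrt R (cell k) (X k).
Proof.
rewrite /cell_sqrt.
have -> : #|[set z : DT | pi z == X]| = (\prod_k #|[set w | cell k w == X k]|)%N.
  transitivity #|(family (fun k => [pred w | cell k w == X k]) : simpl_pred DT)|.
    apply: eq_card => z; rewrite inE; apply/eqP/familyP => [<- k|zX].
      by rewrite inE prodcellE.
    by apply/ffunP => k; rewrite prodcellE; apply/eqP; have := zX k; rewrite inE.
  rewrite card_family foldrE big_map big_enum /=.
  by apply: eq_bigr => k _; apply: eq_card => w; rewrite !inE.
rewrite natr_prod; elim/big_rec2: _ => [|k y s _ <-]; first by rewrite sqrtr1.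
by rewrite sqrtrM ?ler0n.
Qed.

Lemma quotient_prodcell (X Y : DC) :
  quotient AG pi X Y = cartprod (fun k => quotient (A k) (cell k)) X Y.
Proof.
have [x <-] := prodcell_equitable.1 X.
rewrite (quotientE prodcell_equitable) cell_deg_cartprod mulr_sumr.
apply: eq_bigr => k _; rewrite prod_nat_of_bool prodcellE (quotientE (A_equitable k)).
have -> : [forall l, (l != k) ==> (pi x l == Y l)] = agree_off k x Y.
  by apply: eq_forallb => l; rewrite prodcellE.
have [x_agree|] := boolP (agree_off k x Y); last by rewrite !(mulr0, mul0r).
rewrite mulr1 mul1r; congr (_ * _).
have nz k' c := cell_sqrt_neq0 R (A_equitable k').1 c.
rewrite !cell_sqrt_prodcell [X in X / _ = _](bigD1 k) // [X in _ / X = _](bigD1 k) //= prodcellE.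
have -> : \prod_(l | l != k) cell_sqrt R (cell l) (pi x l) =
          \prod_(l | l != k) cell_sqrt R (cell l) (Y l).
  by apply: eq_bigr => l lk; rewrite prodcellE (eqP (implyP (forallP x_agree l) lk)).
by field; rewrite nz prodf_seq_neq0; apply/allP => l _; rewrite nz implybT.
Qed.

End ProductPartition.

Theorem corollary1 (R : realType) (n : nat) (hn : (0 < n)%N)
  (V C : 'I_n -> finType) (e : forall k, rel (V k))
  (hsimple : forall k, simple_graph (e k))
  (a b : forall k, V k) (t : R) (ht : 0 < t)
  (hpst : forall k, pst (adjmx R (e k)) (a k) (b k) t)
  (hneq : exists k, a k != b k)
  (cell : forall k, V k -> C k)
  (hequit : forall k, equitable (adjmx R (e k)) (cell k))
  (hsinga : forall k x, cell k x = cell k (a k) -> x = a k)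
  (hsingb : forall k x, cell k x = cell k (b k) -> x = b k) :
  let AG := cartprod (fun k => adjmx R (e k)) in
  let pi := prodcell cell in
  let av : {dffun forall k : 'I_n, V k} := finfun a in
  let bv : {dffun forall k : 'I_n, V k} := finfun b in
  equitable AG pi /\
  wiso (cartprod (fun k => quotient (adjmx R (e k)) (cell k)))
       (quotient AG pi) /\
  pst (quotient AG pi) (pi av) (pi bv) t.
Proof.
move=> AG pi av bv.
have pi_equitable : equitable AG pi := prodcell_equitable hequit.
have adj_sym k x y : adjmx R (e k) x y = adjmx R (e k) y x.
  by rewrite /adjmx (proj1 (hsimple k) x y).
split=> //; split; first by exists id; split=> [|X Y]; [exists id | exact: quotient_prodcell].
rewrite /pst (exp_entry_quotient_singleton pi_equitable t
  (prodcell_singleton hsinga) (prodcell_singleton hsingb)).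
rewrite exp_entry_cartprod // normr_prod big1 // => k _.
by rewrite ffunE; exact: hpst.
Qed.
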